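(* Let $G=(V,E)$ be a finite simple undirected graph, consider a run of \textsc{1-2-MinGreedy} on $G$ producing $M$, and let $M^*$ be a maximum matching such that each component of $(V,M\cup M^* )$ with an edge is an edge of $M\cap M^*$ or an $M$-$M^*$-path. Then (a) each endpoint of an $M$-$M^*$-path is the target of at most three transfers; and (b) an endpoint $w$ is the target of exactly three transfers if and only if there is a step in which the current degree of $w$ drops from $3$ to $1$ through the removal of two incident $F$-edges, and a later step in which the current degree of $w$ drops from $1$ to $0$ through the removal of its last incident $F$-edge.
   Context: \textsc{1-2-MinGreedy}: starting with $M=\emptyset$ and until no edges remain in the current graph, if every node has current degree at least $3$ select an arbitrary edge $\{u,v\}$, otherwise select an arbitrary node $u$ of minimum non-zero current degree and an arbitrary neighbor $v$; add $\{u,v\}$ to $M$ and remove all edges incident with $u$ or $v$. An $M$-$M^*$-path is a component of $(V,M\cup M^* )$ that is an alternating path starting and ending with an $M^*$-edge, with $m\geq1$ edges of $M$ and $m+1$ edges of $M^*$; its endpoints are its two $M$-uncovered end nodes. $F=E\setminus(M\cup M^* )$. For an endpoint $w$, an edge $\{v,w\}\in F$ is a transfer from $v$ to $w$ if, in the step of the algorithm in which $v$ is matched, the current degree of $w$ drops to at most $1$. *)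

(* A run of 1-2-MinGreedy is the sequence s of selected ordered pairs (u,v);
   in a min-degree step, u is the node of minimum non-zero degree. *)
From mathcomp Require Import all_boot.
Set Implicit Arguments. Unset Strict Implicit. Unset Printing Implicit Defensive.

Section Defs.
Variables (T : finType) (e : rel T).

Definition edges : {set {set T}} :=
  [set f : {set T} | [exists x, exists y, e x y && (f == [set x; y])]].

Definition matched (s : seq (T * T)) (i : nat) : {set T} :=
  [set x | has (fun p : T * T => (p.1 == x) || (p.2 == x)) (take i s)].

(* current graph before step i (after i steps): edges of E not incident
   to any node matched so far *)
Definition curE (s : seq (T * T)) (i : nat) (x y : T) : bool :=
  [&& e x y, x \notin matched s i & y \notin matched s i].

Definition deg (s : seq (T * T)) (i : nat) (x : T) : nat :=
  #|[set y | curE s i x y]|.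

Definition valid_step (s : seq (T * T)) (i : nat) (u v : T) : Prop :=
  curE s i u v /\
  ((forall x, deg s i x = 0 \/ 3 <= deg s i x) \/
   (0 < deg s i u /\ forall x, 0 < deg s i x -> deg s i u <= deg s i x)).

Definition greedy_run (s : seq (T * T)) : Prop :=
  (forall i u v, onth s i = Some (u, v) -> valid_step s i u v) /\
  (forall x y, ~~ curE s (size s) x y).

Definition M_of (s : seq (T * T)) : {set {set T}} :=
  [set [set fst p; snd p] | p in s].

Definition is_matching (N : {set {set T}}) : Prop :=
  (forall f, f \in N -> exists x y, e x y /\ f = [set x; y]) /\
  (forall f g, f \in N -> g \in N -> f != g -> [disjoint f & g]).

Definition maximum_matching (N : {set {set T}}) : Prop :=
  is_matching N /\ forall N', is_matching N' -> #|N'| <= #|N|.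

Definition covered (N : {set {set T}}) (x : T) : bool :=
  [exists f in N, x \in f].

Definition hrel (M Ms : {set {set T}}) : rel T :=
  fun x y => [set x; y] \in M :|: Ms.

Definition component (M Ms : {set {set T}}) (x : T) : {set T} :=
  [set y | connect (hrel M Ms) x y].

(* x :: q is an M-M*-path: alternating path starting and ending with an
   M*-edge, m >= 1 edges of M and m+1 edges of M*, M-uncovered endpoints,
   and it forms a whole component of (V, M \cup M* ). *)
Definition MMpath (M Ms : {set {set T}}) (x : T) (q : seq T) : Prop :=
  let p := x :: q in
  [/\ odd (size q), 3 <= size q, uniq p &
      forall i, i < size q ->
        [set nth x p i; nth x p i.+1] \in (if odd i then M else Ms)] /\
  [/\ ~~ covered M x, ~~ covered M (last x q)
    & [set y in p] = component M Ms x].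

Definition components_ok (M Ms : {set {set T}}) : Prop :=
  forall x, covered (M :|: Ms) x ->
    (exists a b, [set a; b] \in M :&: Ms /\ component M Ms x = [set a; b]) \/
    (exists y q, MMpath M Ms y q /\ component M Ms x = [set z in y :: q]).

Definition endpoint (M Ms : {set {set T}}) (w : T) : Prop :=
  exists x q, MMpath M Ms x q /\ (w = x \/ w = last x q).

Definition Fedges (M Ms : {set {set T}}) : {set {set T}} :=
  edges :\: (M :|: Ms).

Definition matched_at (s : seq (T * T)) (i : nat) (v : T) : bool :=
  [exists u, (onth s i == Some (u, v)) || (onth s i == Some (v, u))].

Definition transfer (s : seq (T * T)) (Ms : {set {set T}}) (v w : T) : bool :=
  ([set v; w] \in Fedges (M_of s) Ms) &&
  [exists i : 'I_(size s),
     [&& matched_at s i v, deg s i.+1 w <= 1 & deg s i.+1 w < deg s i w]].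

Definition ntransfers (s : seq (T * T)) (Ms : {set {set T}}) (w : T) : nat :=
  #|[set v | transfer s Ms v w]|.

Definition removed_F (s : seq (T * T)) (Ms : {set {set T}}) (i : nat) (w : T)
  : Prop :=
  forall x, curE s i w x -> ~~ curE s i.+1 w x ->
    [set w; x] \in Fedges (M_of s) Ms.

End Defs.

(* An endpoint w is never matched, so in each step only the two nodes matched
   in that step can leave its current neighbourhood.  Every transfer into w
   happens at or after the first step i0 after which the degree of w is at
   most 1 (and has just dropped); hence it comes from a neighbour of w current
   before i0.  At most two of these leave at step i0 and at most one survives
   it, so there are at most three.  Three transfers force degree 3 before i0
   and 1 after it, and the surviving neighbour then leaves in a later step
   dropping the degree of w from 1 to 0. *)
From mathcomp Require Import all_boot zify.
Set Implicit Arguments. Unset Strict Implicit. Unset Printing Implicit Defensive.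

Lemma mem_edges2 (T : finType) (e : rel T) x y :
  symmetric e -> irreflexive e -> ([set x; y] \in edges e) = e x y.
Proof.
move=> e_sym e_irr; apply/idP/idP => [|exy]; last first.
  by rewrite inE; apply/existsP; exists x; apply/existsP; exists y; rewrite exy eqxx.
rewrite inE => /existsP [a /existsP [b /andP [eab /eqP xy_ab]]].
have [ab_x ab_y] : a \in [set x; y] /\ b \in [set x; y] by rewrite xy_ab set21 set22.
by move: ab_x ab_y eab => /set2P [] -> /set2P [] ->; rewrite ?e_irr // e_sym.
Qed.

Section CurrentGraph.
Variables (T : finType) (e : rel T) (s : seq (T * T)).

Lemma matched_mono i j x : i <= j -> x \in matched s i -> x \in matched s j.
Proof.
move=> le_ij; rewrite !inE -(take_takel s le_ij) => /hasP [p /mem_take p_s px].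
by apply/hasP; exists p.
Qed.

Lemma matched_onth i p x : onth s i = Some p ->
  (x \in matched s i.+1) = [|| x == p.1, x == p.2 | x \in matched s i].
Proof.
move=> s_i; have lt_i : i < size s by rewrite -onthTE s_i.
rewrite !inE (take_nth p lt_i) (@onth_nth _ p p s i s_i) has_rcons /=.
by rewrite ![_ == x]eq_sym orbA.
Qed.

Lemma curE_mono i j x y : i <= j -> curE e s j x y -> curE e s i x y.
Proof.
move=> le_ij /and3P [exy x_j y_j]; apply/and3P; split => //.
  by apply: contra x_j; apply: matched_mono.
by apply: contra y_j; apply: matched_mono.
Qed.

Definition nbrs i x := [set y | curE e s i x y].

Lemma deg_nbrs i x : deg e s i x = #|nbrs i x|.
Proof. by []. Qed.

Definition lost_nbrs i x := nbrs i x :\: nbrs i.+1 x.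

Lemma nbrs_mono i j x : i <= j -> nbrs j x \subset nbrs i x.
Proof. by move=> le_ij; apply/subsetP => y; rewrite !inE; apply: curE_mono. Qed.

Lemma lost_nbrs_sub i j x : i <= j -> lost_nbrs j x \subset nbrs i x.
Proof.
move=> le_ij; apply: subset_trans (nbrs_mono x le_ij).
by apply/subsetP => y /setDP [].
Qed.

Lemma card_lost_nbrs i x : #|lost_nbrs i x| = deg e s i x - deg e s i.+1 x.
Proof. by rewrite cardsD (setIidPr (nbrs_mono x (leqnSn i))). Qed.

Lemma disjoint_lost_nbrs i j x : i < j -> [disjoint lost_nbrs i x & lost_nbrs j x].
Proof.
move=> lt_ij; rewrite -setI_eq0; apply/eqP/setP => y; rewrite inE in_set0.
apply/negP => /andP [/setDP [_ y_i1] y_j].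
by rewrite (subsetP (lost_nbrs_sub x lt_ij) y y_j) in y_i1.
Qed.

Hypothesis steps_current : forall i u v, onth s i = Some (u, v) -> curE e s i u v.

Section FreeNode.
Variable w : T.
Hypothesis w_free : forall i, w \notin matched s i.

Lemma lost_nbrs_step i u v :
  onth s i = Some (u, v) -> lost_nbrs i w \subset [set u; v].
Proof.
move=> s_i; apply/subsetP => x /setDP [].
rewrite !inE /curE !w_free (matched_onth _ s_i) /= => /andP [ewx x_i].
by rewrite ewx (negbTE x_i) orbF negbK.
Qed.

Lemma card_lost_nbrs_le2 i : i < size s -> #|lost_nbrs i w| <= 2.
Proof.
rewrite -onthTE; case s_i: (onth s i) => [[u v]|] // _.
apply: leq_trans (subset_leq_card (lost_nbrs_step s_i)) _.
by rewrite cards2; case: (u != v).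
Qed.

Lemma lost_nbrs_matched_at i x :
  i < size s -> x \in lost_nbrs i w -> matched_at s i x.
Proof.
rewrite -onthTE; case s_i: (onth s i) => [[u v]|] // _.
move/(subsetP (lost_nbrs_step s_i))/set2P => [] ->; apply/existsP.
  by exists v; rewrite s_i eqxx orbT.
by exists u; rewrite s_i eqxx.
Qed.

Lemma matched_at_lost_nbrs i v : matched_at s i v -> e w v -> v \in lost_nbrs i w.
Proof.
case/existsP => u /orP [] /eqP s_i ewv; have /and3P [_ u_i v_i] := steps_current s_i;
  by rewrite !inE /curE ewv !w_free (matched_onth _ s_i) /= eqxx ?orbT.
Qed.

Variable Ms : {set {set T}}.
Hypotheses (e_sym : symmetric e) (e_irr : irreflexive e).

Definition transfer_step i :=
  [&& i < size s, deg e s i.+1 w <= 1 & deg e s i.+1 w < deg e s i w].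

Definition transfers := [set v | transfer e s Ms v w].

Lemma transfersP v :
  reflect ([set v; w] \in Fedges e (M_of s) Ms /\
           exists2 i, transfer_step i & v \in lost_nbrs i w)
          (v \in transfers).
Proof.
rewrite [_ \in transfers]inE /transfer; apply: (iffP andP) => [] [vwF].
  case/existsP => i /and3P [v_i le1 lt]; split=> //.
  exists i; first by rewrite /transfer_step ltn_ord le1 lt.
  apply: matched_at_lost_nbrs v_i _.
  by move: vwF; rewrite inE => /andP [_]; rewrite mem_edges2 // e_sym.
case=> i /and3P [lt_i le1 lt] v_i; split=> //; apply/existsP.
by exists (Ordinal lt_i); rewrite le1 lt andbT (lost_nbrs_matched_at lt_i v_i).
Qed.

Lemma transfer_step_deg_le3 i : transfer_step i -> deg e s i w <= 3.
Proof.
case/and3P => lt_i le1 _; have := card_lost_nbrs_le2 lt_i.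
rewrite card_lost_nbrs; lia.
Qed.

Lemma transfers_cover :
  transfers != set0 -> exists2 i0, transfer_step i0 & transfers \subset nbrs i0 w.
Proof.
case/set0Pn => v0 /transfersP [_ [i ts_i _]].
have [i0 ts_i0 min_i0] := ex_minnP (ex_intro transfer_step i ts_i).
exists i0 => //; apply/subsetP => v /transfersP [_ [j ts_j v_j]].
exact: subsetP (lost_nbrs_sub w (min_i0 j ts_j)) v v_j.
Qed.

Lemma card_transfers_le3 : #|transfers| <= 3.
Proof.
have [->|/transfers_cover [i0 ts_i0 sub]] := eqVneq transfers set0.
  by rewrite cards0.
exact: leq_trans (subset_leq_card sub) (transfer_step_deg_le3 ts_i0).
Qed.

Lemma removed_F_of_sub_transfers i :
  lost_nbrs i w \subset transfers -> removed_F e s Ms i w.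
Proof.
move=> sub x x_i x_ni1; have x_lost : x \in lost_nbrs i w by rewrite !inE x_i x_ni1.
by rewrite setUC; have /transfersP [] := subsetP sub x x_lost.
Qed.

Lemma lost_nbrs_sub_transfers i :
  transfer_step i -> removed_F e s Ms i w -> lost_nbrs i w \subset transfers.
Proof.
move=> ts_i rF; apply/subsetP => x x_i; apply/transfersP; split; last by exists i.
case/setDP: x_i => x_i x_ni1; rewrite setUC.
by apply: rF; [rewrite inE in x_i | rewrite inE in x_ni1].
Qed.

Definition drops_3_1_0 i j := [/\ i < j, j < size s,
  [/\ deg e s i w = 3, deg e s i.+1 w = 1 & removed_F e s Ms i w] &
  [/\ deg e s j w = 1, deg e s j.+1 w = 0 & removed_F e s Ms j w]].

Lemma three_transfers_first_drop : #|transfers| = 3 ->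
  exists2 i, transfer_step i &
    [/\ deg e s i w = 3, deg e s i.+1 w = 1 & transfers = nbrs i w].
Proof.
move=> card3; have /transfers_cover [i ts_i sub] : transfers != set0.
  by rewrite -card_gt0 card3.
have deg_i : deg e s i w = 3.
  by apply/eqP; rewrite eqn_leq transfer_step_deg_le3 // -card3 subset_leq_card.
exists i => //; split=> //; last by apply/eqP; rewrite eqEcard sub card3 -deg_nbrs deg_i.
case/and3P: ts_i => lt_i le1 _; have := card_lost_nbrs_le2 lt_i.
rewrite card_lost_nbrs deg_i; lia.
Qed.

Lemma drops_3_1_0_of_three_transfers :
  #|transfers| = 3 -> exists i j, drops_3_1_0 i j.
Proof.
case/three_transfers_first_drop => i ts_i [deg_i deg_i1 transfers_i].
have [y nbrs_i1] : exists y, nbrs i.+1 w = [set y] by apply/cards1P/eqP.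
have y_i1 : y \in nbrs i.+1 w by rewrite nbrs_i1 set11.
have /transfersP [_ [j ts_j /setDP [y_j y_nj1]]] : y \in transfers.
  by rewrite transfers_i (subsetP (nbrs_mono w (leqnSn i))).
have lt_ij : i < j.
  rewrite ltnNge; apply: contra y_nj1 => le_ji.
  exact: subsetP (nbrs_mono w (le_ji : j.+1 <= i.+1)) y y_i1.
have nbrs_j : nbrs j w = [set y].
  by apply/eqP; rewrite eqEsubset -{1}nbrs_i1 nbrs_mono //= sub1set.
have deg_j : deg e s j w = 1 by rewrite deg_nbrs nbrs_j cards1.
case/and3P: ts_j => lt_j _; rewrite deg_j ltnS leqn0 => /eqP deg_j1.
exists i, j; split=> //; split=> //; apply: removed_F_of_sub_transfers.
  by rewrite transfers_i; apply: lost_nbrs_sub.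
apply: subset_trans (lost_nbrs_sub w (leqnn j)) _.
by rewrite nbrs_j transfers_i -nbrs_i1 nbrs_mono.
Qed.

Lemma three_transfers_of_drops_3_1_0 i j : drops_3_1_0 i j -> #|transfers| = 3.
Proof.
case=> lt_ij lt_j [deg_i deg_i1 rF_i] [deg_j deg_j1 rF_j].
have ts_i : transfer_step i by rewrite /transfer_step (ltn_trans lt_ij lt_j) deg_i deg_i1.
have ts_j : transfer_step j by rewrite /transfer_step lt_j deg_j deg_j1.
have sub : lost_nbrs i w :|: lost_nbrs j w \subset transfers.
  by rewrite subUset !lost_nbrs_sub_transfers.
apply/eqP; rewrite eqn_leq card_transfers_le3; apply: leq_trans (subset_leq_card sub).
rewrite cardsU disjoint_setI0 ?disjoint_lost_nbrs // cards0 !card_lost_nbrs.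
by rewrite deg_i deg_i1 deg_j deg_j1.
Qed.

End FreeNode.

Lemma uncovered_unmatched w i : ~~ covered (M_of s) w -> w \notin matched s i.
Proof.
apply: contra; rewrite inE => /hasP [p /mem_take p_s wp].
apply/existsP; exists [set p.1; p.2].
rewrite (imset_f (fun q : T * T => [set q.1; q.2]) p_s).
by case/orP: wp => /eqP ->; rewrite !inE eqxx ?orbT.
Qed.

End CurrentGraph.

Lemma endpoint_uncovered (T : finType) (M Ms : {set {set T}}) w :
  endpoint M Ms w -> ~~ covered M w.
Proof. by case=> x [q [[_ [x_free last_free _]] [] ->]]. Qed.

Theorem lemma8 (T : finType) (e : rel T) (s : seq (T * T))
    (Ms : {set {set T}}) :
  symmetric e -> irreflexive e ->
  greedy_run e s ->
  maximum_matching e Ms ->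
  components_ok (M_of s) Ms ->
  (forall w, endpoint (M_of s) Ms w -> ntransfers e s Ms w <= 3) /\
  (forall w, endpoint (M_of s) Ms w ->
     (ntransfers e s Ms w = 3 <->
      exists i j, [/\ i < j, j < size s,
        [/\ deg e s i w = 3, deg e s i.+1 w = 1 & removed_F e s Ms i w] &
        [/\ deg e s j w = 1, deg e s j.+1 w = 0 & removed_F e s Ms j w]])).
Proof.
(* Only the M-uncoveredness of endpoints matters. *)
move=> e_sym e_irr [run_valid _] _ _.
have steps_current i u v : onth s i = Some (u, v) -> curE e s i u v.
  by case/run_valid.
have w_free w : endpoint (M_of s) Ms w -> forall i, w \notin matched s i.
  by move/endpoint_uncovered => w_unc i; apply: uncovered_unmatched.
split=> w /w_free free_w; first exact: card_transfers_le3.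
split; first exact: drops_3_1_0_of_three_transfers.
by case=> i [j]; apply: three_transfers_of_drops_3_1_0.
Qed.
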